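(* Let $f:E\to\mathbb{R}$ be either convex or continuously differentiable (possibly non-convex), and let $\varepsilon>0$. Then the iterates of Algorithm UAGMsDR with accuracy $\varepsilon$ satisfy, for every $k\ge0$, $$A_kf(x^k)\le\min_{x\in E}\psi_k(x)+\frac{A_k\varepsilon}{2}=\psi_k(v^k)+\frac{A_k\varepsilon}{2},$$ and $$A_k\ge\sup_{\nu\in[0,1]:\,M_\nu<\infty}\ c_\nu\,\frac{k^{\frac{1+3\nu}{1+\nu}}\,\varepsilon^{\frac{1-\nu}{1+\nu}}}{2^{\frac{1+3\nu}{1+\nu}}\,M_\nu^{\frac{2}{1+\nu}}},\qquad c_\nu=\left[\frac{1+\nu}{1-\nu}\right]^{\frac{1-\nu}{1+\nu}}\ (\nu<1),\ c_1=1.$$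
   Context: $E$ is a finite-dimensional real vector space with a norm $\|\cdot\|$; $E^*$ is its dual, $\langle g,x\rangle$ denotes the value of $g\in E^*$ at $x\in E$, and $\|g\|_*=\max\{\langle g,x\rangle:\|x\|\le 1\}$. For $g\in E^*$, $g^{\#}$ denotes a (fixed) element $s\in E$ with $\|s\|\le 1$ and $\langle g,s\rangle=\|g\|_*$. A prox-function $d:E\to\mathbb{R}$ is continuously differentiable, convex, $1$-strongly convex with respect to $\|\cdot\|$ and satisfies $\min_E d=0$; its Bregman divergence is $V(x,z)=d(x)-d(z)-\langle\nabla d(z),x-z\rangle$. $\nabla f(x)$ denotes the gradient of $f$ if $f$ is differentiable and otherwise a subgradient of the convex function $f$ (as selected by the algorithm). For $\nu\in[0,1]$, $M_\nu\in(0,+\infty]$ denotes the smallest constant such that $\|\nabla f(x)-\nabla f(y)\|_*\le M_\nu\|x-y\|^\nu$ for all $x,y\in E$ (Hölder continuity of the (sub)gradient; $M_\nu=+\infty$ if no such constant exists). Algorithm UAGMsDR (input $x^0\in E$, accuracy $\varepsilon>0$): set $A_0=0$, $v^0=x^0$, $\psi_0(x)=V(x,x^0)$. For $k=0,1,2,\dots$: 1. Choose $\beta_k\in\arg\min_{\beta\in[0,1]}f(v^k+\beta(x^k-v^k))$, set $y^k=v^k+\beta_k(x^k-v^k)$, and choose $\nabla f(y^k)$ (the gradient, or a subgradient in the convex nonsmooth case) such that $\langle\nabla f(y^k),v^k-y^k\rangle\ge0$ (such a choice exists by optimality of $\beta_k$). 2. $h_{k+1}\in\arg\min_{h\ge0}f(y^k-h(\nabla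 f(y^k))^{\#})$, $x^{k+1}=y^k-h_{k+1}(\nabla f(y^k))^{\#}$; $a_{k+1}$ is the largest solution of $f(y^k)-\frac{a_{k+1}^2}{2(A_k+a_{k+1})}\|\nabla f(y^k)\|_*^2+\frac{\varepsilon a_{k+1}}{2(A_k+a_{k+1})}=f(x^{k+1})$. 3. $A_{k+1}=A_k+a_{k+1}$; $\psi_{k+1}(x)=\psi_k(x)+a_{k+1}\{f(y^k)+\langle\nabla f(y^k),x-y^k\rangle\}$; $v^{k+1}=\arg\min_{x\in E}\psi_{k+1}(x)$. All minima are assumed attained, and $\nabla f(y^k)\ne0$ for all iterations considered. *)

(* classical reals. E is modelled as R^n = (Fin.t n -> R),
   E* is identified with R^n via the standard pairing. *)
From Stdlib Require Import Reals Lra Classical ClassicalEpsilon FunctionalExtensionality.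
From Stdlib Require Vectors.Fin.
Open Scope R_scope.

Definition Vec (n : nat) := Fin.t n -> R.

Fixpoint fsum (n : nat) : (Fin.t n -> R) -> R :=
  match n with
  | O => fun _ => 0
  | S m => fun f => f Fin.F1 + fsum m (fun i => f (Fin.FS i))
  end.

Definition vadd {n} (x y : Vec n) : Vec n := fun i => x i + y i.
Definition vsub {n} (x y : Vec n) : Vec n := fun i => x i - y i.
Definition vscal {n} (c : R) (x : Vec n) : Vec n := fun i => c * x i.
Definition vzero {n} : Vec n := fun _ => 0.

Definition pair {n} (g x : Vec n) : R := fsum n (fun i => g i * x i).

Definition is_norm {n} (N : Vec n -> R) : Prop :=
  (forall x, 0 <= N x) /\
  (forall x, N x = 0 -> x = vzero) /\
  (forall c x, N (vscal c x) = Rabs c * N x) /\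
  (forall x y, N (vadd x y) <= N x + N y).

Definition is_dual_norm_val {n} (N : Vec n -> R) (g : Vec n) (r : R) : Prop :=
  (exists x, N x <= 1 /\ pair g x = r) /\ (forall x, N x <= 1 -> pair g x <= r).

Definition dnorm {n} (N : Vec n -> R) (g : Vec n) : R :=
  epsilon (inhabits 0) (is_dual_norm_val N g).

Definition is_sharp {n} (N : Vec n -> R) (sharp : Vec n -> Vec n) : Prop :=
  forall g, N (sharp g) <= 1 /\ pair g (sharp g) = dnorm N g.

Definition convex {n} (f : Vec n -> R) : Prop :=
  forall x y t, 0 <= t <= 1 ->
    f (vadd (vscal t x) (vscal (1 - t) y)) <= t * f x + (1 - t) * f y.

Definition is_subgrad {n} (f : Vec n -> R) (x g : Vec n) : Prop :=
  forall y, f y >= f x + pair g (vsub y x).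

Definition has_grad {n} (N : Vec n -> R) (f : Vec n -> R) (G : Vec n -> Vec n) : Prop :=
  forall x eps, 0 < eps -> exists delta, 0 < delta /\
    forall h, N h < delta ->
      Rabs (f (vadd x h) - f x - pair (G x) h) <= eps * N h.

Definition grad_cont {n} (N : Vec n -> R) (G : Vec n -> Vec n) : Prop :=
  forall x eps, 0 < eps -> exists delta, 0 < delta /\
    forall y, N (vsub y x) < delta -> dnorm N (vsub (G y) (G x)) < eps.

Definition C1_grad {n} (N : Vec n -> R) (f : Vec n -> R) (G : Vec n -> Vec n) : Prop :=
  has_grad N f G /\ grad_cont N G.

Definition prox_fun {n} (N : Vec n -> R) (d : Vec n -> R) (Dd : Vec n -> Vec n) : Prop :=
  C1_grad N d Dd /\ convex d /\
  (forall x y, d y >= d x + pair (Dd x) (vsub y x) + / 2 * (N (vsub y x)) ^ 2) /\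
  (forall x, 0 <= d x) /\ (exists x, d x = 0).

Definition bregman {n} (d : Vec n -> R) (Dd : Vec n -> Vec n) (x z : Vec n) : R :=
  d x - d z - pair (Dd z) (vsub x z).

(* real power with the conventions 0^0 = 1 and 0^a = 0 for a <> 0 *)
Definition hpow (x a : R) : R :=
  if Req_EM_T x 0 then (if Req_EM_T a 0 then 1 else 0) else Rpower x a.

Definition holder {n} (N : Vec n -> R) (D : Vec n -> Vec n) (nu M : R) : Prop :=
  forall x y, dnorm N (vsub (D x) (D y)) <= M * hpow (N (vsub x y)) nu.

Definition c_nu (nu : R) : R :=
  if Rlt_dec nu 1 then Rpower ((1 + nu) / (1 - nu)) ((1 - nu) / (1 + nu)) else 1.

Definition a_eq (fy fx G eps Ak a : R) : Prop :=
  Ak + a <> 0 /\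
  fy - a ^ 2 / (2 * (Ak + a)) * G ^ 2 + eps * a / (2 * (Ak + a)) = fx.

Definition UAGMsDR_run {n} (N : Vec n -> R) (f : Vec n -> R) (D : Vec n -> Vec n)
  (sharp : Vec n -> Vec n) (d : Vec n -> R) (Dd : Vec n -> Vec n) (eps : R)
  (x v y : nat -> Vec n) (beta h a A : nat -> R) (psi : nat -> Vec n -> R) : Prop :=
  A 0%nat = 0 /\ v 0%nat = x 0%nat /\
  psi 0%nat = (fun z => bregman d Dd z (x 0%nat)) /\
  forall k : nat,
    (0 <= beta k <= 1 /\
     (forall b, 0 <= b <= 1 ->
        f (vadd (v k) (vscal (beta k) (vsub (x k) (v k))))
        <= f (vadd (v k) (vscal b (vsub (x k) (v k)))))) /\
    y k = vadd (v k) (vscal (beta k) (vsub (x k) (v k))) /\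
    pair (D (y k)) (vsub (v k) (y k)) >= 0 /\
    (0 <= h (S k) /\
     (forall h', 0 <= h' ->
        f (vsub (y k) (vscal (h (S k)) (sharp (D (y k)))))
        <= f (vsub (y k) (vscal h' (sharp (D (y k))))))) /\
    x (S k) = vsub (y k) (vscal (h (S k)) (sharp (D (y k)))) /\
    a_eq (f (y k)) (f (x (S k))) (dnorm N (D (y k))) eps (A k) (a (S k)) /\
    (forall a', a_eq (f (y k)) (f (x (S k))) (dnorm N (D (y k))) eps (A k) a' ->
        a' <= a (S k)) /\
    A (S k) = A k + a (S k) /\
    psi (S k) = (fun z => psi k z + a (S k) * (f (y k) + pair (D (y k)) (vsub z (y k)))) /\
    (forall z, psi (S k) (v (S k)) <= psi (S k) z).

(* Part one is the estimate-sequence argument: psi_k is 1-strongly convex with minimiser v^k,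
   so psi_(k+1)(v^(k+1)) >= psi_k(v^k) + |v^(k+1) - v^k|^2/2 + a_(k+1) (f(y^k) + <g, v^(k+1) - y^k>)
   with g = grad f(y^k); the line-search facts <g, v^k - y^k> >= 0 and f(y^k) <= f(x^k), and the
   defining equation of a_(k+1), close the induction.

   For the rate, Hoelder continuity of the gradient bounds f along the ray y^k - t g^# by
   f(y^k) - t |g|_* + M t^(1+nu)/(1+nu), and x^(k+1) is at least as good. Evaluating at
   t = a_(k+1)^2 |g|_* / A_(k+1) in the equation for a_(k+1) and applying weighted AM-GM gives
   a_(k+1)^(1+3nu) >= C^(1+nu) A_(k+1)^(2nu), where C is the constant of the rate. For
   r = (1+nu)/(1+3nu) >= 1/2 this yields A_(k+1)^r - A_k^r >= C^r/2, hence A_k >= (k C^r / 2)^(1/r).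
   Finite dimension is used only to know that the dual norm is attained. *)

From Stdlib Require Import Reals Lra Classical ClassicalEpsilon FunctionalExtensionality.
From mathcomp Require all_boot all_order all_algebra all_classical all_reals all_analysis.
From mathcomp Require lra Rstruct.
Open Scope R_scope.

Ltac vec_ext := apply functional_extensionality; intro;
  unfold vadd, vsub, vscal, vzero; ring.

Lemma fsum_add n (f g : Fin.t n -> R) : fsum n (fun i => f i + g i) = fsum n f + fsum n g.
Proof.
  induction n as [|n IH]; simpl; [lra|].
  rewrite (IH (fun i => f (Fin.FS i)) (fun i => g (Fin.FS i))). ring.
Qed.

Lemma fsum_scal n c (f : Fin.t n -> R) : fsum n (fun i => c * f i) = c * fsum n f.
Proof. induction n as [|n IH]; simpl; [lra|]. rewrite (IH (fun i => f (Fin.FS i))). ring. Qed.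

Lemma fsum_ge0 n (f : Fin.t n -> R) : (forall i, 0 <= f i) -> 0 <= fsum n f.
Proof.
  induction n as [|n IH]; intros Hf; simpl; [lra|].
  pose proof (Hf Fin.F1). pose proof (IH (fun i => f (Fin.FS i)) (fun i => Hf _)). lra.
Qed.

Lemma fsum_gt0 n (f : Fin.t n -> R) i : (forall j, 0 <= f j) -> 0 < f i -> 0 < fsum n f.
Proof.
  induction n as [|n IH]; [inversion i|]. intros Hf. simpl.
  pattern i; apply Fin.caseS'.
  - intros Hi. pose proof (fsum_ge0 n (fun j => f (Fin.FS j)) (fun j => Hf _)). lra.
  - intros j Hj. pose proof (IH (fun j => f (Fin.FS j)) j (fun j => Hf _) Hj).
    pose proof (Hf Fin.F1). lra.
Qed.

Section Pairing.
Variable n : nat.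
Implicit Types g x y : Vec n.

Lemma pair_vadd_r g x y : pair g (vadd x y) = pair g x + pair g y.
Proof. unfold pair, vadd. rewrite <- fsum_add. f_equal. vec_ext. Qed.

Lemma pair_vscal_r g c x : pair g (vscal c x) = c * pair g x.
Proof. unfold pair, vscal. rewrite <- fsum_scal. f_equal. vec_ext. Qed.

Lemma pair_vadd_l g h x : pair (vadd g h) x = pair g x + pair h x.
Proof. unfold pair, vadd. rewrite <- fsum_add. f_equal. vec_ext. Qed.

Lemma pair_vscal_l g c x : pair (vscal c g) x = c * pair g x.
Proof. unfold pair, vscal. rewrite <- fsum_scal. f_equal. vec_ext. Qed.

Lemma pair_vsub_r g x y : pair g (vsub x y) = pair g x - pair g y.
Proof.
  replace (vsub x y) with (vadd x (vscal (-1) y)) by vec_ext.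
  rewrite pair_vadd_r, pair_vscal_r. ring.
Qed.

Lemma pair_vsub_l g h x : pair (vsub g h) x = pair g x - pair h x.
Proof.
  replace (vsub g h) with (vadd g (vscal (-1) h)) by vec_ext.
  rewrite pair_vadd_l, pair_vscal_l. ring.
Qed.

Lemma pair_vzero_r g : pair g vzero = 0.
Proof. replace (@vzero n) with (vscal 0 (@vzero n)) by vec_ext. rewrite pair_vscal_r. ring. Qed.

Lemma pair_self_gt0 g : g <> vzero -> 0 < pair g g.
Proof.
  intros Hg. destruct (not_all_ex_not _ _ (fun H => Hg (functional_extensionality _ _ H)))
    as [i Hi].
  apply (fsum_gt0 _ _ i); intros; [apply Rle_0_sqr | apply Rsqr_pos_lt; exact Hi].
Qed.

End Pairing.

Section Norm.
Variables (n : nat) (N : Vec n -> R).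
Hypothesis HN : is_norm N.

Lemma norm_ge0 x : 0 <= N x.
Proof. apply HN. Qed.

Lemma norm_vscal c x : N (vscal c x) = Rabs c * N x.
Proof. apply HN. Qed.

Lemma norm_vzero : N vzero = 0.
Proof.
  replace (@vzero n) with (vscal 0 (@vzero n)) by vec_ext.
  rewrite norm_vscal, Rabs_R0. ring.
Qed.

Lemma norm_vsub_sym x y : N (vsub x y) = N (vsub y x).
Proof.
  replace (vsub x y) with (vscal (Ropp 1) (vsub y x)) by vec_ext.
  rewrite norm_vscal, Rabs_Ropp, Rabs_R1. ring.
Qed.

End Norm.

(* Finite dimension enters here: the norm ball is compact, so a linear functional attains
   its maximum on it; proved on row vectors of mathcomp-analysis and transported to [Vec]. *)
Module DualNormAttained.
Import all_boot all_order all_algebra all_classical all_reals all_analysis lra Rstruct.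
Import Order.TTheory GRing.Theory Num.Theory Num.Def numFieldNormedType.Exports.
Local Open Scope ring_scope.
Local Open Scope classical_set_scope.

Section RowVectors.
Variables (R : realType) (n : nat).
Local Notation V := 'rV[R]_n.+1.

Lemma lipschitz_continuous (f : V -> R) (K : R) : 0 < K ->
  (forall u v, `|f u - f v| <= K * `|u - v|) -> continuous f.
Proof.
move=> K0 fl x; apply/(@cvgrPdist_lt _ R^o _ _ (nbhs_filter x)) => e e0.
apply/(@nbhs_normP R V x (fun t => `|f x - f t| < e)); exists (e / K) => /=.
  by rewrite divr_gt0.
by move=> y /= hy; apply: le_lt_trans (fl _ _) _; rewrite mulrC -ltr_pdivlMr.
Qed.

Lemma coord_le_norm (u : V) j : `|u 0 j| <= `|u|.
Proof.
have /mapP[k Hk ->] : `|u 0 j| \in [seq `|u x.1 x.2| | x : 'I_1 * 'I_n.+1].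
  by apply/mapP; exists (ord0, j) => //=; rewrite mem_enum.
by rewrite [leRHS]/normr /= mx_normrE; apply/bigmax_geP; right => /=; exists k.
Qed.

Variables (Nt L : V -> R).
Hypothesis NtD : forall u v, Nt (u + v) <= Nt u + Nt v.
Hypothesis NtZ : forall (c : R) u, Nt (c *: u) = `|c| * Nt u.
Hypothesis Nt_gt0 : forall u, u != 0 -> 0 < Nt u.
Hypothesis LD : forall u v, L (u + v) = L u + L v.
Hypothesis LZ : forall (c : R) u, L (c *: u) = c * L u.

Lemma Nt0 : Nt 0 = 0.
Proof. by rewrite -(scale0r (0 : V)) NtZ normr0 mul0r. Qed.

Lemma Nt_ge0 u : 0 <= Nt u.
Proof. by have [->|/Nt_gt0/ltW//] := eqVneq u 0; rewrite Nt0. Qed.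

Lemma NtN u : Nt (- u) = Nt u.
Proof. by rewrite -scaleN1r NtZ normrN normr1 mul1r. Qed.

Lemma LB u v : L (u - v) = L u - L v.
Proof. by apply/eqP; rewrite eq_sym subr_eq -LD subrK. Qed.

Lemma L_le_norm u : `|L u| <= (\sum_(j < n.+1) `|L 'e_j|) * `|u|.
Proof.
have L_sum (r : seq 'I_n.+1) (F : 'I_n.+1 -> V) :
    L (\sum_(i <- r) F i) = \sum_(i <- r) L (F i).
  elim: r => [|a r IH]; last by rewrite !big_cons LD IH.
  by rewrite !big_nil -(scale0r (0 : V)) LZ mul0r.
rewrite {1}(row_sum_delta u) L_sum mulr_suml; apply: le_trans (ler_norm_sum _ _ _) _.
by apply: ler_sum => j _; rewrite LZ normrM mulrC ler_wpM2l ?coord_le_norm.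
Qed.

Lemma Nt_le_norm u : Nt u <= (\sum_(j < n.+1) Nt 'e_j) * `|u|.
Proof.
have Nt_sum (r : seq 'I_n.+1) (F : 'I_n.+1 -> V) :
    Nt (\sum_(i <- r) F i) <= \sum_(i <- r) Nt (F i).
  elim: r => [|a r IH]; first by rewrite !big_nil Nt0.
  by rewrite !big_cons; apply: le_trans (NtD _ _) _; rewrite lerD2l.
rewrite {1}(row_sum_delta u) mulr_suml; apply: le_trans (Nt_sum _ _) _.
by apply: ler_sum => j _; rewrite NtZ mulrC ler_wpM2l ?Nt_ge0 ?coord_le_norm.
Qed.

Lemma L_continuous : continuous L.
Proof.
apply: (@lipschitz_continuous L (\sum_(j < n.+1) `|L 'e_j| + 1)).
  by rewrite ltr_wpDl ?sumr_ge0.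
move=> u v; rewrite -LB; apply: le_trans (L_le_norm _) _.
by rewrite ler_wpM2r ?normr_ge0 // lerDl.
Qed.

Lemma Nt_continuous : continuous Nt.
Proof.
apply: (@lipschitz_continuous Nt (\sum_(j < n.+1) Nt 'e_j + 1)).
  by rewrite ltr_wpDl ?sumr_ge0 // => j _; apply: Nt_ge0.
move=> u v; apply: le_trans (_ : _ <= Nt (u - v)) _; last first.
  by apply: le_trans (Nt_le_norm _) _; rewrite ler_wpM2r ?normr_ge0 // lerDl.
have h1 := NtD u (v - u); rewrite [u + _]addrC subrK -(NtN (v - u)) opprB in h1.
have h2 := NtD (u - v) v; rewrite subrK in h2.
rewrite ler_distl; apply/andP; split.
  by rewrite lerBlDr; apply: (le_trans h1); rewrite addrC.
by apply: (le_trans h2); rewrite addrC.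
Qed.

Definition unit_sphere : set V := [set u | `|u| = 1].

Lemma unit_sphere_compact : compact unit_sphere.
Proof.
apply: bounded_closed_compact.
  by exists 1; split => // M M1 u Su; rewrite /= Su ltW.
apply: (@preimage_closed _ _ (fun u : V => `|u|) [set x : R | x = 1]).
  by move=> u _; apply: norm_continuous.
exact: closed_eq.
Qed.

Lemma unit_sphere_neq0 u : unit_sphere u -> u != 0.
Proof.
rewrite /unit_sphere /= => Su; apply/eqP => u0; move: Su; rewrite u0 normr0 => /eqP.
by rewrite eq_sym oner_eq0.
Qed.

Lemma normalize_in_unit_sphere u : u != 0 -> unit_sphere (`|u|^-1 *: u).
Proof.
by move=> u0; rewrite /unit_sphere /= normrZ ger0_norm ?invr_ge0 ?normr_ge0 // mulVf ?normr_eq0.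
Qed.

(* The ratio L/Nt is homogeneous of degree 0, so its maximum over the Euclidean sphere
   is its maximum over all nonzero vectors. *)
Lemma linear_max_on_ball :
  exists s : V, Nt s <= 1 /\ 0 <= L s /\ forall u, L u <= L s * Nt u.
Proof.
pose H u := L u / Nt u.
have H_cont : {within unit_sphere, continuous H}.
  apply: continuous_in_subspaceT => u; rewrite inE => Su.
  apply: (@cvgM _ _ _ (nbhs_filter u)); first exact: L_continuous.
  apply: (@cvgV _ _ _ (nbhs_filter u)); last exact: Nt_continuous.
  by rewrite gt_eqF // Nt_gt0 // unit_sphere_neq0.
have e0S : unit_sphere (`|'e_0 : V|^-1 *: 'e_0).
  apply: normalize_in_unit_sphere; apply/eqP => /(congr1 (fun m : V => m 0 0)).
  by rewrite !mxE eqxx /= => /eqP; rewrite oner_eq0.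
have [c /set_mem cS cmax] := EVT_max_rV (ex_intro _ _ e0S) unit_sphere_compact H_cont.
have Nc : 0 < Nt c by apply/Nt_gt0/unit_sphere_neq0.
have Ls : L ((Nt c)^-1 *: c) = H c by rewrite LZ /H mulrC.
exists ((Nt c)^-1 *: c); rewrite NtZ gtr0_norm ?invr_gt0 // mulVf ?gt_eqF // Ls.
split; [by [] | split].
  have := cmax (- c); rewrite inE /unit_sphere /= normrN => /(_ cS).
  by rewrite /H -scaleN1r LZ NtZ normrN normr1 mul1r mulN1r mulNr => h; lra.
move=> u; have [->|u0] := eqVneq u 0; first by rewrite -(scale0r (0 : V)) LZ NtZ normr0 !mul0r mulr0.
have un : 0 < `|u|^-1 by rewrite invr_gt0 normr_gt0.
have := cmax _ (mem_set (normalize_in_unit_sphere _ u0)).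
rewrite /H LZ NtZ gtr0_norm // invfM mulrACA mulfV ?gt_eqF // mul1r.
by rewrite ler_pdivrMr // Nt_gt0.
Qed.

End RowVectors.

Definition ord_of_fin {n} (i : Fin.t n) : 'I_n :=
  Ordinal (introT ssrnat.ltP (proj2_sig (Fin.to_nat i))).
Definition fin_of_ord {n} (j : 'I_n) : Fin.t n := Fin.of_nat_lt (elimT ssrnat.ltP (ltn_ord j)).

Lemma fin_of_ordK n (i : Fin.t n) : fin_of_ord (ord_of_fin i) = i.
Proof. by rewrite /fin_of_ord -[RHS](Fin.of_nat_to_nat_inv i); exact: Fin.of_nat_ext. Qed.

Lemma ord_of_finK n (j : 'I_n) : ord_of_fin (fin_of_ord j) = j.
Proof. by apply: val_inj; rewrite /= /fin_of_ord Fin.to_nat_of_nat. Qed.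

Definition vec_of_row {n} (u : 'rV[R]_n) : Vec n := fun i => u ord0 (ord_of_fin i).

Lemma pair_max_on_ball (m : nat) (N : Vec m.+1 -> R) (g : Vec m.+1) : is_norm N ->
  exists s, Rle (N s) 1 /\ (forall x, Rle (N x) 1 -> Rle (pair g x) (pair g s)).
Proof.
move=> [N0 [Ndef [NZ ND]]].
have rowD (u v : 'rV[R]_m.+1) : vec_of_row (u + v) = vadd (vec_of_row u) (vec_of_row v).
  by apply: functional_extensionality => i; rewrite /vec_of_row /vadd !mxE.
have rowZ (c : R) (u : 'rV[R]_m.+1) : vec_of_row (c *: u) = vscal c (vec_of_row u).
  by apply: functional_extensionality => i; rewrite /vec_of_row /vscal !mxE.
have row_vec x : vec_of_row (\row_j x (fin_of_ord j)) = x.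
  by apply: functional_extensionality => i; rewrite /vec_of_row mxE fin_of_ordK.
have Nt_gt0 (u : 'rV[R]_m.+1) : u != 0 -> 0 < N (vec_of_row u).
  move=> u0; rewrite lt_neqAle; apply/andP; split; last exact/RleP.
  apply/eqP => /esym/Ndef hz.
  move/eqP: u0; apply; apply/rowP => j; rewrite mxE.
  by have := congr1 (fun f => f (fin_of_ord j)) hz; rewrite /vec_of_row ord_of_finK.
have NtD (u v : 'rV[R]_m.+1) : N (vec_of_row (u + v)) <= N (vec_of_row u) + N (vec_of_row v).
  by apply/RleP; rewrite rowD; apply: ND.
have NtZ (c : R) (u : 'rV[R]_m.+1) : N (vec_of_row (c *: u)) = `|c| * N (vec_of_row u).
  by rewrite rowZ NZ.
have LD (u v : 'rV[R]_m.+1) : pair g (vec_of_row (u + v)) = pair g (vec_of_row u) + pair g (vec_of_row v).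
  by rewrite rowD pair_vadd_r.
have LZ (c : R) (u : 'rV[R]_m.+1) : pair g (vec_of_row (c *: u)) = c * pair g (vec_of_row u).
  by rewrite rowZ pair_vscal_r.
have [s [Ns [Ls Lmax]]] := @linear_max_on_ball R m _ _ NtD NtZ Nt_gt0 LD LZ.
exists (vec_of_row s); split; first exact/RleP.
move=> x Nx; have := Lmax (\row_j x (fin_of_ord j)); rewrite /= row_vec => /RleP h.
apply: (Rle_trans _ _ _ h); rewrite -[X in Rle _ X]Rmult_1_r.
by apply: Rmult_le_compat_l => //; apply/RleP.
Qed.

End DualNormAttained.

Section DualNorm.
Variables (n : nat) (N : Vec n -> R).
Hypothesis HN : is_norm N.

Lemma dnorm_spec g : is_dual_norm_val N g (dnorm N g).
Proof.
  unfold dnorm. apply epsilon_spec. destruct n as [|m].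
  - exists 0. split.
    + exists vzero. rewrite norm_vzero by exact HN. split; [lra | reflexivity].
    + intros x _. unfold pair. simpl. lra.
  - destruct (DualNormAttained.pair_max_on_ball m N g HN) as [s [Hs Hmax]].
    exists (pair g s). split; [exists s; split|]; auto.
Qed.

Lemma dnorm_ge0 g : 0 <= dnorm N g.
Proof.
  destruct (dnorm_spec g) as [_ Hmax]. rewrite <- (pair_vzero_r n g).
  apply Hmax. rewrite norm_vzero by exact HN. lra.
Qed.

Lemma pair_le_dnorm g x : pair g x <= dnorm N g * N x.
Proof.
  destruct (Req_dec (N x) 0) as [H0|H0].
  - rewrite H0, (proj1 (proj2 HN) x H0), pair_vzero_r. lra.
  - assert (Hx : 0 < N x) by (pose proof (norm_ge0 n N HN x); lra).
    destruct (dnorm_spec g) as [_ Hmax].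
    assert (Hunit : N (vscal (/ N x) x) <= 1).
    { rewrite (norm_vscal n N HN), Rabs_pos_eq by (left; apply Rinv_0_lt_compat; lra).
      rewrite Rinv_l; lra. }
    pose proof (Hmax _ Hunit) as Hle. rewrite pair_vscal_r in Hle.
    apply Rmult_le_reg_l with (/ N x); [apply Rinv_0_lt_compat; lra|].
    replace (/ N x * (dnorm N g * N x)) with (dnorm N g) by (field; lra). exact Hle.
Qed.

Lemma dnorm_gt0 g : g <> vzero -> 0 < dnorm N g.
Proof.
  intros Hg. pose proof (pair_self_gt0 n g Hg). pose proof (pair_le_dnorm g g).
  pose proof (dnorm_ge0 g). pose proof (norm_ge0 n N HN g). nra.
Qed.

End DualNorm.

Lemma le_of_forall_interpolate a b c :
  (forall t, 0 < t <= 1 -> a + (1 - t) * c <= b) -> a + c <= b.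
Proof.
  intros H. pose proof (H 1 ltac:(lra)) as Hab.
  destruct (Rle_or_lt c 0) as [Hc|Hc]; [lra|].
  apply Rnot_lt_le; intro Hlt.
  set (t := (a + c - b) / (2 * c)).
  assert (Ht : 0 < t <= 1).
  { unfold t; split; [apply Rdiv_lt_0_compat; lra|].
    apply Rmult_le_reg_r with (2 * c); [lra|]. unfold Rdiv. rewrite Rmult_assoc, Rinv_l; lra. }
  pose proof (H t Ht) as Hle.
  replace ((1 - t) * c) with (c - (a + c - b) / 2) in Hle by (unfold t; field; lra). lra.
Qed.

Definition strongly_convex_with {n} (N : Vec n -> R) (F : Vec n -> R) (G : Vec n -> Vec n) :=
  forall x y, F y >= F x + pair (G x) (vsub y x) + / 2 * N (vsub y x) ^ 2.

Lemma strongly_convex_add_affine n N (F : Vec n -> R) G al be :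
  strongly_convex_with N F G ->
  strongly_convex_with N (fun z => F z + pair al z + be) (fun z => vadd (G z) al).
Proof.
  intros HF x y. pose proof (HF x y).
  rewrite pair_vadd_l, !pair_vsub_r in *. lra.
Qed.

(* Strong convexity along the segment from the minimizer [v] to [z], then [t -> 0]. *)
Lemma strongly_convex_min_growth n N (F : Vec n -> R) G v z : is_norm N ->
  strongly_convex_with N F G -> (forall w, F v <= F w) ->
  F v + / 2 * N (vsub z v) ^ 2 <= F z.
Proof.
  intros HN HF Hmin. apply le_of_forall_interpolate. intros t Ht.
  set (w := vadd (vscal t z) (vscal (1 - t) v)).
  set (nn := N (vsub z v)).
  pose proof (HF w z) as Hz. pose proof (HF w v) as Hv.
  replace (vsub z w) with (vscal (1 - t) (vsub z v)) in Hz by (unfold w; vec_ext).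
  replace (vsub v w) with (vscal (- t) (vsub z v)) in Hv by (unfold w; vec_ext).
  rewrite pair_vscal_r, (norm_vscal n N HN), Rabs_pos_eq in Hz by lra.
  rewrite pair_vscal_r, (norm_vscal n N HN), Rabs_Ropp, Rabs_pos_eq in Hv by lra.
  fold nn in Hz, Hv. pose proof (Hmin w).
  set (P := pair (G w) (vsub z v)) in *.
  assert (Hw : F w + / 2 * t * (1 - t) * nn ^ 2 <= t * F z + (1 - t) * F v) by nra.
  apply Rmult_le_reg_l with t; [lra|]. nra.
Qed.

Lemma le_of_right_limit (g : R -> R) X K T : continuity_pt g 0 -> 0 < T ->
  (forall a, 0 < a < T -> X <= g a + K * a) -> X <= g 0.
Proof.
  intros Hc HT Hle. apply Rnot_lt_le; intro Hlt.
  set (e := X - g 0).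
  destruct (Hc (e / 2) ltac:(unfold e; lra)) as [del [Hdel Hnear]].
  set (a := Rmin (Rmin (T / 2) (del / 2)) (e / (2 * (Rabs K + 1)))).
  assert (HK : 0 < Rabs K + 1) by (pose proof (Rabs_pos K); lra).
  assert (Ha : 0 < a).
  { unfold a. repeat apply Rmin_pos; try lra. apply Rdiv_lt_0_compat; unfold e; lra. }
  assert (HaT : a <= T / 2) by (unfold a; eapply Rle_trans; apply Rmin_l).
  assert (Had : a <= del / 2) by (unfold a; eapply Rle_trans; [apply Rmin_l | apply Rmin_r]).
  assert (Hae : a * (Rabs K + 1) <= e / 2).
  { apply Rmult_le_reg_r with (/ (Rabs K + 1)); [apply Rinv_0_lt_compat; lra|].
    rewrite Rmult_assoc, Rinv_r, Rmult_1_r by lra.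
    replace (e / 2 * / (Rabs K + 1)) with (e / (2 * (Rabs K + 1))) by (field; lra).
    apply Rmin_r. }
  assert (Hga : g a - g 0 < e / 2).
  { assert (Hd : R_dist (g a) (g 0) < e / 2).
    { apply Hnear. split; [split; [exact I | lra]|].
      change (Rabs (a - 0) < del). rewrite Rminus_0_r, Rabs_pos_eq; lra. }
    unfold R_dist in Hd. apply Rabs_def2 in Hd. lra. }
  pose proof (Hle a ltac:(lra)). pose proof (Rle_abs K).
  assert (K * a <= Rabs K * a) by (apply Rmult_le_compat_r; lra).
  unfold e in *. nra.
Qed.

Lemma hoelder_descent_1d (g p : R -> R) (G M nu : R) : 0 <= nu -> 0 <= M ->
  (forall t, derivable_pt_lim g t (- p t)) ->
  (forall t, 0 < t -> G - M * Rpower t nu <= p t) ->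
  forall T, 0 < T -> g T <= g 0 - T * G + M / (1 + nu) * Rpower T (1 + nu).
Proof.
  intros Hnu HM Hder Hp T HT.
  set (phi := fun t => g t + G * t - M / (1 + nu) * Rpower t (1 + nu)).
  assert (Hmono : forall a, 0 < a < T -> phi T <= phi a).
  { intros a Ha.
    destruct (MVT_cor2 phi (fun c => - p c + G * 1 - M / (1 + nu) * ((1 + nu) * Rpower c (1 + nu - 1)))
                a T) as [c [Hc Hcab]]; [lra | |].
    - intros c Hc. unfold phi.
      apply derivable_pt_lim_minus; [apply derivable_pt_lim_plus|].
      + apply Hder.
      + apply (derivable_pt_lim_scal (fun t => t)), derivable_pt_lim_id.
      + apply (derivable_pt_lim_scal (fun t => Rpower t (1 + nu))), derivable_pt_lim_power. lra.
    - replace (1 + nu - 1) with nu in Hc by ring.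
      replace (M / (1 + nu) * ((1 + nu) * Rpower c nu)) with (M * Rpower c nu) in Hc by (field; lra).
      pose proof (Hp c ltac:(lra)). nra. }
  assert (Hcont : continuity_pt g 0) by exact (derivable_continuous_pt _ _ (exist _ _ (Hder 0))).
  enough (phi T <= g 0) by (unfold phi in *; lra).
  apply (le_of_right_limit g (phi T) G T Hcont HT). intros a Ha.
  pose proof (Hmono a Ha). unfold phi in *.
  assert (0 <= M / (1 + nu)) by (apply Rmult_le_pos; [lra | left; apply Rinv_0_lt_compat; lra]).
  pose proof (exp_pos ((1 + nu) * ln a)). fold (Rpower a (1 + nu)) in *. nra.
Qed.

Lemma ln_le_compat x y : 0 < x -> x <= y -> ln x <= ln y.
Proof. intros Hx [Hlt|Heq]; [left; apply ln_increasing; lra | subst; lra]. Qed.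

Lemma exp_le_compat x y : x <= y -> exp x <= exp y.
Proof. intros [Hlt|Heq]; [left; apply exp_increasing; lra | subst; lra]. Qed.

Lemma ln_div x y : 0 < x -> 0 < y -> ln (x / y) = ln x - ln y.
Proof. intros. unfold Rdiv. rewrite ln_mult, ln_Rinv; try lra. apply Rinv_0_lt_compat; lra. Qed.

Lemma weighted_amgm X Y th : 0 < X -> 0 < Y -> 0 <= th <= 1 ->
  exp (th * ln X + (1 - th) * ln Y) <= th * X + (1 - th) * Y.
Proof.
  intros HX HY Hth.
  set (m := th * ln X + (1 - th) * ln Y).
  (* the tangent line of exp at m lies below exp at ln X and at ln Y *)
  assert (Htan : forall Z, 0 < Z -> exp m * (1 + (ln Z - m)) <= Z).
  { intros Z HZ. pose proof (exp_ineq1_le (ln Z - m)).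
    rewrite <- (exp_ln Z) at 2 by exact HZ.
    replace (ln Z) with (m + (ln Z - m)) at 2 by ring. rewrite exp_plus.
    apply Rmult_le_compat_l; [left; apply exp_pos | lra]. }
  pose proof (Htan X HX). pose proof (Htan Y HY).
  replace (exp m) with (th * (exp m * (1 + (ln X - m))) + (1 - th) * (exp m * (1 + (ln Y - m))))
    by (unfold m; ring).
  apply Rplus_le_compat; apply Rmult_le_compat_l; lra.
Qed.

Lemma ln_c_nu nu : 0 <= nu < 1 ->
  ln (c_nu nu) = (1 - nu) / (1 + nu) * (ln (1 + nu) - ln (1 - nu)).
Proof.
  intros Hnu. unfold c_nu. destruct (Rlt_dec nu 1) as [_|]; [|lra].
  rewrite ln_Rpower. unfold Rdiv at 2. rewrite ln_mult, ln_Rinv; try lra.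
  apply Rinv_0_lt_compat; lra.
Qed.

(* Weighted AM-GM with weights (1+nu)/2 and (1-nu)/2 balances [X G^2] against [dl]. *)
Lemma hoelder_balance_ln nu M X dl G : 0 <= nu <= 1 -> 0 < M -> 0 < X -> 0 < dl -> 0 < G ->
  X * G ^ 2 + dl <= 2 * M / (1 + nu) * Rpower (X * G) (1 + nu) ->
  (1 + nu) * ln (c_nu nu) + (1 - nu) * ln dl <= 2 * ln M + (1 + nu) * ln X.
Proof.
  intros Hnu HM HX Hdl HG Hbal.
  assert (HXG : 0 < X * G) by nra.
  destruct (Req_dec nu 1) as [->|Hnu1].
  - unfold c_nu. destruct (Rlt_dec 1 1) as [|_]; [lra|].
    replace (1 + 1) with (INR 2) in Hbal by (simpl; ring).
    rewrite Rpower_pow in Hbal by exact HXG.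
    assert (HMX : 1 < M * X).
    { assert (Hpos : 0 < X * G ^ 2) by nra.
      replace (2 * M / INR 2 * (X * G) ^ 2) with (M * X * (X * G ^ 2)) in Hbal by (simpl; field).
      nra. }
    pose proof (ln_increasing 1 (M * X) ltac:(lra) HMX) as Hln.
    rewrite ln_1, ln_mult in Hln by lra. rewrite ln_1. lra.
  - set (th := (1 + nu) / 2).
    assert (Hth : 0 < th < 1) by (unfold th; lra).
    pose proof (weighted_amgm (X * G ^ 2 / th) (dl / (1 - th)) th) as Hamgm.
    replace (th * (X * G ^ 2 / th) + (1 - th) * (dl / (1 - th))) with (X * G ^ 2 + dl)
      in Hamgm by (field; lra).
    specialize (Hamgm ltac:(apply Rdiv_lt_0_compat; nra) ltac:(apply Rdiv_lt_0_compat; lra)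
      ltac:(lra)).
    pose proof (ln_le_compat _ _ (exp_pos _) (Rle_trans _ _ _ Hamgm Hbal)) as Hle.
    rewrite ln_exp in Hle.
    assert (Hth2 : ln th = ln (1 + nu) - ln 2) by (unfold th; apply ln_div; lra).
    assert (H1th : ln (1 - th) = ln (1 - nu) - ln 2).
    { replace (1 - th) with ((1 - nu) / 2) by (unfold th; field). apply ln_div; lra. }
    rewrite ln_div, ln_mult, ln_pow, ln_div, Hth2, H1th in Hle by (try nra; lra).
    rewrite ln_mult, ln_div, ln_mult, ln_Rpower, ln_mult in Hle
      by (try apply exp_pos; try apply Rdiv_lt_0_compat; lra).
    rewrite ln_c_nu by lra.
    replace ((1 + nu) * ((1 - nu) / (1 + nu) * (ln (1 + nu) - ln (1 - nu))))
      with ((1 - nu) * (ln (1 + nu) - ln (1 - nu))) by (field; lra).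
    unfold th in Hle. simpl in Hle. nra.
Qed.

Definition ln_rate (nu eps M : R) : R :=
  ln (c_nu nu) + (1 - nu) / (1 + nu) * ln eps - 2 / (1 + nu) * ln M.

(* Test the descent bound at [t = a^2 G / (A+a)]; the step-size equation then gives the balance. *)
Lemma step_size_ln_bound nu M eps G A a Dl : 0 <= nu <= 1 -> 0 < M -> 0 < eps -> 0 < G ->
  0 <= A -> 0 < a ->
  2 * (A + a) * Dl = a ^ 2 * G ^ 2 - eps * a ->
  (forall t, 0 < t -> t * G - M / (1 + nu) * Rpower t (1 + nu) <= Dl) ->
  (1 + nu) * ln_rate nu eps M + 2 * nu * ln (A + a) <= (1 + 3 * nu) * ln a.
Proof.
  intros Hnu HM Heps HG HA Ha Hstep Hdesc.
  set (X := a * a / (A + a)). set (dl := eps * a / (A + a)).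
  assert (HX : 0 < X) by (unfold X; apply Rdiv_lt_0_compat; nra).
  assert (Hdl : 0 < dl) by (unfold dl; apply Rdiv_lt_0_compat; nra).
  assert (H2Dl : 2 * Dl = X * G ^ 2 - dl).
  { unfold X, dl. apply Rmult_eq_reg_l with (A + a); [|lra].
    field_simplify; [nra | lra]. }
  pose proof (Hdesc (X * G) ltac:(nra)) as Ht.
  assert (Hbal : X * G ^ 2 + dl <= 2 * M / (1 + nu) * Rpower (X * G) (1 + nu)).
  { replace (2 * M / (1 + nu)) with (2 * (M / (1 + nu))) by (field; lra). nra. }
  pose proof (hoelder_balance_ln nu M X dl G Hnu HM HX Hdl HG Hbal) as Hln.
  unfold X, dl in Hln. rewrite !ln_div, !ln_mult in Hln by (try nra; lra).
  replace ((1 + nu) * ln_rate nu eps M)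
    with ((1 + nu) * ln (c_nu nu) + (1 - nu) * ln eps - 2 * ln M) by (unfold ln_rate; field; lra).
  nra.
Qed.

(* [r >= 1/2] lets [A^r <= (A+a)^r * sqrt (A/(A+a))], and [2 sqrt s <= 1 + s]. *)
Lemma Rpower_increment_ge r lK A a : / 2 <= r <= 1 -> 0 < A -> 0 < a ->
  lK + (1 - r) * ln (A + a) <= ln a ->
  exp lK / 2 <= Rpower (A + a) r - Rpower A r.
Proof.
  intros Hr HA Ha Hl. unfold Rpower.
  set (Ap := A + a) in *.
  assert (HAp : 0 < Ap) by (unfold Ap; lra).
  set (u := exp (r * ln Ap)). set (w := exp (r * ln A)). set (K := exp lK).
  set (sg := exp ((ln A - ln Ap) / 2)).
  assert (Hu : 0 < u) by apply exp_pos. assert (HK : 0 < K) by apply exp_pos.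
  assert (Hsg : 0 < sg) by apply exp_pos.
  assert (HKa : K * Ap <= a * u).
  { pose proof (exp_le_compat _ _ Hl) as He. rewrite exp_ln in He by lra.
    replace (K * Ap) with (exp (lK + (1 - r) * ln Ap) * u).
    - apply Rmult_le_compat_r; lra.
    - unfold u, K. rewrite <- exp_plus.
      replace (lK + (1 - r) * ln Ap + r * ln Ap) with (lK + ln Ap) by ring.
      rewrite exp_plus, exp_ln; lra. }
  assert (Hsg2 : sg * sg * Ap = A).
  { unfold sg. rewrite <- exp_plus.
    replace ((ln A - ln Ap) / 2 + (ln A - ln Ap) / 2) with (ln A + - ln Ap) by field.
    rewrite exp_plus, exp_Ropp, !exp_ln by lra. field; lra. }
  assert (Hw : w <= u * sg).
  { replace w with (u * exp (r * (ln A - ln Ap))) by (unfold u, w; rewrite <- exp_plus; f_equal; ring).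
    apply Rmult_le_compat_l; [lra|]. apply exp_le_compat.
    pose proof (ln_le_compat A Ap HA ltac:(unfold Ap; lra)). nra. }
  assert (H2w : 2 * w * Ap <= u * (Ap + A)).
  { pose proof (pow2_ge_0 (sg - 1)). rewrite <- Hsg2.
    assert (w * Ap <= u * sg * Ap) by (apply Rmult_le_compat_r; lra).
    assert (0 <= u * Ap * (sg - 1) ^ 2) by (apply Rmult_le_pos; nra).
    nra. }
  assert (K * Ap <= 2 * (u - w) * Ap) by (unfold Ap in *; nra).
  apply Rmult_le_reg_r with Ap; lra.
Qed.

Section PartialSums.
Variables (A a : nat -> R).
Hypothesis HA0 : A 0%nat = 0.
Hypothesis HAS : forall k, A (S k) = A k + a (S k).
Hypothesis Ha : forall k, 0 < a (S k).

Lemma partial_sum_gt0 k : 0 < A (S k).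
Proof.
  induction k as [|k IH]; rewrite HAS; [rewrite HA0; pose proof (Ha 0%nat) | pose proof (Ha (S k))]; lra.
Qed.

Lemma Rpower_partial_sum_ge r lK : / 2 <= r <= 1 ->
  (forall k, lK + (1 - r) * ln (A (S k)) <= ln (a (S k))) ->
  forall k, INR (S k) * exp lK / 2 <= Rpower (A (S k)) r.
Proof.
  intros Hr Hl k. induction k as [|k IH].
  - specialize (Hl 0%nat). rewrite HAS, HA0, Rplus_0_l in *.
    pose proof (exp_le_compat lK (r * ln (a 1%nat)) ltac:(lra)).
    pose proof (exp_pos lK). unfold Rpower. simpl. lra.
  - pose proof (Rpower_increment_ge r lK (A (S k)) (a (S (S k))) Hr (partial_sum_gt0 k)
      (Ha (S k))) as Hinc.
    rewrite <- HAS in Hinc. specialize (Hinc (Hl (S k))).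
    rewrite S_INR. lra.
Qed.

(* With [q = (1+3nu)/(1+nu)] the bound reads [A_k >= (k exp(ln_rate/q) / 2)^q]. *)
Lemma partial_sum_rate nu M eps : 0 <= nu <= 1 ->
  (forall k, (1 + nu) * ln_rate nu eps M + 2 * nu * ln (A (S k)) <= (1 + 3 * nu) * ln (a (S k))) ->
  forall k, c_nu nu * hpow (INR k) ((1 + 3 * nu) / (1 + nu)) * Rpower eps ((1 - nu) / (1 + nu))
         / (Rpower 2 ((1 + 3 * nu) / (1 + nu)) * Rpower M (2 / (1 + nu))) <= A k.
Proof.
  intros Hnu Hl k.
  set (q := (1 + 3 * nu) / (1 + nu)).
  assert (Hq : 0 < q) by (unfold q; apply Rdiv_lt_0_compat; lra).
  destruct k as [|k].
  - rewrite HA0. unfold hpow. simpl INR.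
    destruct (Req_EM_T 0 0) as [_|]; [|lra]. destruct (Req_EM_T q 0) as [|_]; [lra|].
    unfold Rdiv. rewrite Rmult_0_r, !Rmult_0_l. lra.
  - set (r := (1 + nu) / (1 + 3 * nu)).
    set (lK := r * ln_rate nu eps M).
    assert (Hr : / 2 <= r <= 1).
    { unfold r. split; apply Rmult_le_reg_r with (1 + 3 * nu); try lra;
      unfold Rdiv; rewrite Rmult_assoc, Rinv_l; lra. }
    assert (Hl' : forall k, lK + (1 - r) * ln (A (S k)) <= ln (a (S k))).
    { intro j. apply Rmult_le_reg_l with (1 + 3 * nu); [lra|].
      replace ((1 + 3 * nu) * (lK + (1 - r) * ln (A (S j))))
        with ((1 + nu) * ln_rate nu eps M + 2 * nu * ln (A (S j))) by (unfold lK, r; field; lra).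
      apply Hl. }
    pose proof (Rpower_partial_sum_ge r lK Hr Hl' k) as Hgrow.
    pose proof (partial_sum_gt0 k) as HAk.
    assert (Hk : 0 < INR (S k)) by (apply lt_0_INR; auto with arith).
    assert (HkK : 0 < INR (S k) * exp lK) by (pose proof (exp_pos lK); nra).
    apply ln_le_compat in Hgrow; [|lra].
    rewrite ln_div, ln_mult, ln_exp, ln_Rpower in Hgrow by (try apply exp_pos; lra).
    replace (c_nu nu * hpow (INR (S k)) q * Rpower eps ((1 - nu) / (1 + nu))
         / (Rpower 2 q * Rpower M (2 / (1 + nu)))) with (exp (q * (ln (INR (S k)) + lK - ln 2))).
    + rewrite <- (exp_ln (A (S k))) by exact HAk. apply exp_le_compat.
      replace (ln (A (S k))) with (q * (r * ln (A (S k)))) by (unfold q, r; field; lra).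
      apply Rmult_le_compat_l; lra.
    + unfold hpow. destruct (Req_EM_T (INR (S k)) 0) as [|_]; [lra|].
      rewrite <- (exp_ln (c_nu nu)) by (unfold c_nu; destruct (Rlt_dec nu 1); [apply exp_pos | lra]).
      unfold Rpower. rewrite <- !exp_plus. unfold Rdiv. rewrite <- exp_Ropp, <- exp_plus.
      f_equal. unfold lK, ln_rate, q, r. field. lra.
Qed.

End PartialSums.

Lemma hpow_le_Rpower u c nu : 0 <= nu -> 0 <= u <= c -> 0 < c -> hpow u nu <= Rpower c nu.
Proof.
  intros Hnu Hu Hc. unfold hpow.
  destruct (Req_EM_T u 0) as [|Hu0]; [destruct (Req_EM_T nu 0) as [->|]|].
  - rewrite Rpower_O; lra.
  - left; apply exp_pos.
  - apply Rle_Rpower_l; lra.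
Qed.

Section DescentAlongLine.
Variables (n : nat) (N : Vec n -> R) (f : Vec n -> R) (D : Vec n -> Vec n).
Hypothesis HN : is_norm N.
Variables (nu M : R) (y0 s : Vec n).
Hypothesis Hnu : 0 <= nu <= 1.
Hypothesis HM : 0 < M.
Hypothesis Hhol : holder N D nu M.
Hypothesis Hs : N s <= 1.

Definition line (t : R) : Vec n := vsub y0 (vscal t s).
Definition slope (t : R) : R := pair (D (line t)) s.

Lemma line_vsub t1 t2 : vsub (line t1) (line t2) = vscal (t2 - t1) s.
Proof. unfold line; vec_ext. Qed.

Lemma line_0 : line 0 = y0.
Proof. unfold line; vec_ext. Qed.

Lemma norm_line_vsub t1 t2 : N (vsub (line t1) (line t2)) <= Rabs (t2 - t1).
Proof.
  rewrite line_vsub, (norm_vscal n N HN).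
  pose proof (Rabs_pos (t2 - t1)). pose proof (norm_ge0 n N HN s). nra.
Qed.

Lemma slope_sub_le t1 t2 : t1 <> t2 -> slope t1 - slope t2 <= M * Rpower (Rabs (t2 - t1)) nu.
Proof.
  intros Ht. unfold slope. rewrite <- pair_vsub_l.
  assert (Hpos : 0 < Rabs (t2 - t1)) by (apply Rabs_pos_lt; lra).
  pose proof (pair_le_dnorm n N HN (vsub (D (line t1)) (D (line t2))) s).
  pose proof (dnorm_ge0 n N HN (vsub (D (line t1)) (D (line t2)))).
  pose proof (Hhol (line t1) (line t2)).
  pose proof (hpow_le_Rpower _ _ nu ltac:(lra)
    (conj (norm_ge0 n N HN _) (norm_line_vsub t1 t2)) Hpos).
  pose proof (norm_ge0 n N HN s). nra.
Qed.

Lemma slope_ge t : 0 < t -> pair (D y0) s - M * Rpower t nu <= slope t.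
Proof.
  intros Ht. pose proof (slope_sub_le 0 t ltac:(lra)) as H.
  unfold slope at 1 in H. rewrite line_0, Rminus_0_r, Rabs_pos_eq in H; lra.
Qed.

Lemma f_line_derivative_C1 : C1_grad N f D -> forall t, derivable_pt_lim (fun t => f (line t)) t (- slope t).
Proof.
  intros [Hgrad _] t eps Heps.
  destruct (Hgrad (line t) (eps / 2) ltac:(lra)) as [del [Hdel Hnear]].
  exists (mkposreal del Hdel). intros hh Hh0 Hhd. simpl in Hhd.
  assert (Hpos : 0 < Rabs hh) by (apply Rabs_pos_lt; auto).
  assert (Hstep : N (vscal (- hh) s) <= Rabs hh).
  { rewrite (norm_vscal n N HN), Rabs_Ropp. pose proof (norm_ge0 n N HN s). nra. }
  specialize (Hnear (vscal (- hh) s) ltac:(lra)).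
  replace (vadd (line t) (vscal (- hh) s)) with (line (t + hh)) in Hnear by (unfold line; vec_ext).
  rewrite pair_vscal_r in Hnear. fold (slope t) in Hnear.
  replace ((f (line (t + hh)) - f (line t)) / hh - - slope t)
    with ((f (line (t + hh)) - f (line t) - - hh * slope t) * / hh) by (field; auto).
  rewrite Rabs_mult, Rabs_inv.
  apply Rmult_lt_reg_r with (Rabs hh); auto.
  rewrite Rmult_assoc, Rinv_l, Rmult_1_r by lra.
  pose proof (norm_ge0 n N HN (vscal (- hh) s)). nra.
Qed.

(* The two subgradient inequalities squeeze the difference quotient; Hoelder continuity with
   [nu > 0] closes the gap. *)
Lemma f_line_derivative_convex : 0 < nu -> (forall z, is_subgrad f z (D z)) ->
  forall t, derivable_pt_lim (fun t => f (line t)) t (- slope t).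
Proof.
  intros Hnu0 Hsub t eps Heps.
  set (del := Rpower (eps / (2 * M)) (/ nu)).
  assert (Hdel : 0 < del) by apply exp_pos.
  exists (mkposreal del Hdel). intros hh Hh0 Hhd. simpl in Hhd.
  assert (Hpos : 0 < Rabs hh) by (apply Rabs_pos_lt; auto).
  pose proof (Hsub (line t) (line (t + hh))) as S1.
  pose proof (Hsub (line (t + hh)) (line t)) as S2.
  rewrite line_vsub, pair_vscal_r in S1, S2. fold (slope t) (slope (t + hh)) in S1, S2.
  replace (t - (t + hh)) with (- hh) in S1 by ring.
  replace (t + hh - t) with hh in S2 by ring.
  assert (Hsmall : M * Rpower (Rabs hh) nu < eps / 2).
  { replace (eps / 2) with (M * Rpower del nu).
    - apply Rmult_lt_compat_l; [lra|]. apply Rlt_Rpower_l; lra.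
    - unfold del. rewrite Rpower_mult. replace (/ nu * nu) with 1 by (field; lra).
      rewrite Rpower_1; [field; lra | apply Rdiv_lt_0_compat; lra]. }
  assert (Hdiff : hh * (slope t - slope (t + hh)) <= Rabs hh * (M * Rpower (Rabs hh) nu)).
  { pose proof (slope_sub_le t (t + hh) ltac:(lra)) as D1.
    pose proof (slope_sub_le (t + hh) t ltac:(lra)) as D2.
    replace (t + hh - t) with hh in D1 by ring.
    replace (t - (t + hh)) with (- hh) in D2 by ring. rewrite Rabs_Ropp in D2.
    destruct (Rle_or_lt 0 hh).
    - rewrite Rabs_pos_eq in * by lra. apply Rmult_le_compat_l; lra.
    - rewrite Rabs_left in * by lra. nra. }
  set (X := f (line (t + hh)) - f (line t) + hh * slope t).
  replace ((f (line (t + hh)) - f (line t)) / hh - - slope t) with (X * / hh) by (unfold X; field; auto).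
  rewrite Rabs_mult, Rabs_inv, Rabs_pos_eq by (unfold X; lra).
  apply Rmult_lt_reg_r with (Rabs hh); auto.
  rewrite Rmult_assoc, Rinv_l, Rmult_1_r by lra.
  unfold X. nra.
Qed.

Lemma f_line_descent : ((convex f /\ forall z, is_subgrad f z (D z)) \/ C1_grad N f D) ->
  forall T, 0 < T -> f (line T) <= f y0 - T * pair (D y0) s + M / (1 + nu) * Rpower T (1 + nu).
Proof.
  intros Hf T HT. rewrite <- line_0 at 1.
  assert (Hderiv_descent : (forall t, derivable_pt_lim (fun t => f (line t)) t (- slope t)) ->
            f (line T) <= f (line 0) - T * pair (D y0) s + M / (1 + nu) * Rpower T (1 + nu)).
  { intros Hder. apply (hoelder_descent_1d (fun t => f (line t)) slope); auto; try lra.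
    exact slope_ge. }
  destruct Hf as [[_ Hsub] | HC1]; [|exact (Hderiv_descent (f_line_derivative_C1 HC1))].
  destruct (Req_dec nu 0) as [Hnu0|Hnu0]; [|apply Hderiv_descent, f_line_derivative_convex; auto; lra].
  (* nu = 0: the subgradient at [line T] alone suffices *)
  pose proof (Hsub (line T) (line 0)) as Hsg. rewrite line_vsub, pair_vscal_r in Hsg.
  fold (slope T) in Hsg. pose proof (slope_ge T HT) as Hsl.
  rewrite Hnu0, Rpower_O in Hsl by lra. rewrite Hnu0, Rplus_0_r, Rpower_1 by lra.
  replace (M / 1) with M by field. replace (T - 0) with T in Hsg by ring. nra.
Qed.

End DescentAlongLine.

Lemma quadratic_pos_root p b c : 0 < p -> 0 < b -> 0 <= c ->
  exists r, 0 < r /\ p * r ^ 2 - b * r - c = 0.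
Proof.
  intros Hp Hb Hc.
  pose proof (sqrt_pos (b ^ 2 + 4 * p * c)) as Hsq0.
  assert (Hsq : sqrt (b ^ 2 + 4 * p * c) * sqrt (b ^ 2 + 4 * p * c) = b ^ 2 + 4 * p * c)
    by (apply sqrt_sqrt; nra).
  set (sq := sqrt (b ^ 2 + 4 * p * c)) in *.
  exists ((b + sq) / (2 * p)). split.
  - apply Rdiv_lt_0_compat; lra.
  - field_simplify; [|lra]. replace (sq ^ 2) with (sq * sq) by ring. rewrite Hsq. field. lra.
Qed.

Section Run.
Variables (n : nat) (N : Vec n -> R) (f : Vec n -> R) (D : Vec n -> Vec n)
  (sharp : Vec n -> Vec n) (d : Vec n -> R) (Dd : Vec n -> Vec n) (eps : R)
  (x v y : nat -> Vec n) (beta h a A : nat -> R) (psi : nat -> Vec n -> R).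
Hypothesis HN : is_norm N.
Hypothesis Hprox : prox_fun N d Dd.
Hypothesis Heps : 0 < eps.
Hypothesis Hrun : UAGMsDR_run N f D sharp d Dd eps x v y beta h a A psi.
Hypothesis Hnz : forall k, D (y k) <> vzero.

Let A_0 : A 0%nat = 0 := proj1 Hrun.
Let v_0 : v 0%nat = x 0%nat := proj1 (proj2 Hrun).
Let psi_0 : psi 0%nat = (fun z => bregman d Dd z (x 0%nat)) := proj1 (proj2 (proj2 Hrun)).
Let step := proj2 (proj2 (proj2 Hrun)).

Lemma A_succ k : A (S k) = A k + a (S k).
Proof. apply (step k). Qed.

Lemma a_eq_succ k : a_eq (f (y k)) (f (x (S k))) (dnorm N (D (y k))) eps (A k) (a (S k)).
Proof. apply (step k). Qed.

Lemma f_y_le_f_x k : f (y k) <= f (x k).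
Proof.
  destruct (step k) as [[_ Hbmin] [Hy _]]. rewrite Hy.
  replace (x k) with (vadd (v k) (vscal 1 (vsub (x k) (v k)))) at 2 by vec_ext.
  apply Hbmin; lra.
Qed.

Lemma f_x_succ_le_line k t : 0 <= t ->
  f (x (S k)) <= f (vsub (y k) (vscal t (sharp (D (y k))))).
Proof. destruct (step k) as [_ [_ [_ [[_ Hhmin] [-> _]]]]]. apply Hhmin. Qed.

Lemma f_x_succ_le_f_y k : f (x (S k)) <= f (y k).
Proof.
  pose proof (f_x_succ_le_line k 0 (Rle_refl 0)) as H.
  replace (vsub (y k) (vscal 0 (sharp (D (y k))))) with (y k) in H by vec_ext. exact H.
Qed.

(* [a (S k)] is the largest root of a quadratic which, as [f (x (S k)) <= f (y k)],
   has a positive root. *)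
Lemma a_succ_gt0_of k : 0 <= A k -> 0 < a (S k).
Proof.
  intros HA.
  destruct (step k) as [_ [_ [_ [_ [_ [_ [Hamax _]]]]]]].
  set (G := dnorm N (D (y k))) in *.
  assert (HG : 0 < G) by (apply dnorm_gt0; auto).
  set (Dl := f (y k) - f (x (S k))).
  assert (HDl : 0 <= Dl) by (pose proof (f_x_succ_le_f_y k); unfold Dl; lra).
  destruct (quadratic_pos_root (G ^ 2) (eps + 2 * Dl) (2 * Dl * A k))
    as [r [Hr Hroot]]; [nra | lra | nra |].
  enough (a_eq (f (y k)) (f (x (S k))) G eps (A k) r) by (pose proof (Hamax r H); lra).
  split; [lra|].
  replace (f (y k) - r ^ 2 / (2 * (A k + r)) * G ^ 2 + eps * r / (2 * (A k + r)))
    with (f (y k) - (G ^ 2 * r ^ 2 - eps * r) / (2 * (A k + r))) by (field; lra).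
  replace (G ^ 2 * r ^ 2 - eps * r) with (2 * Dl * (A k + r)) by lra.
  unfold Dl. field. lra.
Qed.

Lemma A_ge0 k : 0 <= A k.
Proof.
  induction k as [|k IH]; [rewrite A_0; lra|].
  rewrite A_succ. pose proof (a_succ_gt0_of k IH). lra.
Qed.

Lemma a_succ_gt0 k : 0 < a (S k).
Proof. apply a_succ_gt0_of, A_ge0. Qed.

Lemma psi_strongly_convex k : exists G, strongly_convex_with N (psi k) G.
Proof.
  destruct Hprox as [_ [_ [Hsc _]]].
  induction k as [|k [G IH]].
  - exists (fun z => vadd (Dd z) (vscal (-1) (Dd (x 0%nat)))).
    replace (psi 0%nat) with (fun z => d z + pair (vscal (-1) (Dd (x 0%nat))) z
                                       + (pair (Dd (x 0%nat)) (x 0%nat) - d (x 0%nat))).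
    + apply strongly_convex_add_affine. exact Hsc.
    + rewrite psi_0. apply functional_extensionality. intro z. unfold bregman.
      rewrite pair_vscal_l, pair_vsub_r. ring.
  - destruct (step k) as [_ [_ [_ [_ [_ [_ [_ [_ [-> _]]]]]]]]].
    exists (fun z => vadd (G z) (vscal (a (S k)) (D (y k)))).
    replace (fun z => psi k z + a (S k) * (f (y k) + pair (D (y k)) (vsub z (y k))))
      with (fun z => psi k z + pair (vscal (a (S k)) (D (y k))) z
                     + a (S k) * (f (y k) - pair (D (y k)) (y k))).
    + apply strongly_convex_add_affine. exact IH.
    + apply functional_extensionality. intro z. rewrite pair_vscal_l, pair_vsub_r. ring.
Qed.

Lemma psi_v_min k z : psi k (v k) <= psi k z.
Proof.
  destruct k as [|k]; [|apply (step k)].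
  destruct Hprox as [_ [_ [Hsc _]]].
  rewrite psi_0, v_0. unfold bregman.
  replace (vsub (x 0%nat) (x 0%nat)) with (@vzero n) by vec_ext. rewrite pair_vzero_r.
  pose proof (Hsc (x 0%nat) z). pose proof (norm_ge0 n N HN (vsub z (x 0%nat))). nra.
Qed.

Lemma estimate_sequence k : A k * f (x k) <= psi k (v k) + A k * eps / 2.
Proof.
  induction k as [|k IH].
  - rewrite A_0, psi_0, v_0. unfold bregman.
    replace (vsub (x 0%nat) (x 0%nat)) with (@vzero n) by vec_ext. rewrite pair_vzero_r. lra.
  - destruct (step k) as [_ [_ [Hdir [_ [_ [[_ Hfx] [_ [_ [Hpsi _]]]]]]]]].
    set (g := D (y k)) in *. set (G := dnorm N g) in *.
    set (nn := N (vsub (v (S k)) (v k))).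
    assert (Hgrowth : psi k (v k) + / 2 * nn ^ 2 <= psi k (v (S k))).
    { destruct (psi_strongly_convex k) as [Gk Hk].
      apply (strongly_convex_min_growth n N _ Gk); auto. apply psi_v_min. }
    assert (Hdual : pair g (vsub (v k) (v (S k))) <= G * nn).
    { unfold nn. rewrite (norm_vsub_sym n N HN). apply (pair_le_dnorm n N HN). }
    assert (HAfx : A (S k) * f (x (S k)) =
                   A (S k) * f (y k) - a (S k) ^ 2 * G ^ 2 / 2 + eps * a (S k) / 2).
    { rewrite A_succ, <- Hfx. field. rewrite <- A_succ. pose proof (A_ge0 k).
      pose proof (a_succ_gt0 k). rewrite A_succ. lra. }
    rewrite HAfx, Hpsi, A_succ. rewrite pair_vsub_r in *. apply Rge_le in Hdir.
    pose proof (f_y_le_f_x k). pose proof (A_ge0 k). pose proof (a_succ_gt0 k).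
    assert (A k * f (y k) <= A k * f (x k)) by (apply Rmult_le_compat_l; lra).
    assert (0 <= a (S k) * (pair g (v k) - pair g (y k))) by (apply Rmult_le_pos; lra).
    assert (a (S k) * (pair g (v k) - pair g (v (S k))) <= a (S k) * (G * nn))
      by (apply Rmult_le_compat_l; lra).
    pose proof (pow2_ge_0 (nn - a (S k) * G)).
    nra.
Qed.

Lemma descent_step k nu M : 0 <= nu <= 1 -> 0 < M -> holder N D nu M ->
  ((convex f /\ forall z, is_subgrad f z (D z)) \/ C1_grad N f D) ->
  is_sharp N sharp ->
  forall t, 0 < t ->
    t * dnorm N (D (y k)) - M / (1 + nu) * Rpower t (1 + nu) <= f (y k) - f (x (S k)).
Proof.
  intros Hnu HM Hhol Hf Hsharp t Ht.
  destruct (Hsharp (D (y k))) as [Hs HG].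
  pose proof (f_line_descent n N f D HN nu M (y k) (sharp (D (y k))) Hnu HM Hhol Hs Hf t Ht)
    as Hdesc.
  rewrite HG in Hdesc. unfold line in Hdesc.
  pose proof (f_x_succ_le_line k t ltac:(lra)). lra.
Qed.

Lemma A_rate nu M : 0 <= nu <= 1 -> 0 < M -> holder N D nu M ->
  ((convex f /\ forall z, is_subgrad f z (D z)) \/ C1_grad N f D) ->
  is_sharp N sharp ->
  forall k, c_nu nu * hpow (INR k) ((1 + 3 * nu) / (1 + nu)) * Rpower eps ((1 - nu) / (1 + nu))
         / (Rpower 2 ((1 + 3 * nu) / (1 + nu)) * Rpower M (2 / (1 + nu))) <= A k.
Proof.
  intros Hnu HM Hhol Hf Hsharp.
  apply (partial_sum_rate A a A_0 A_succ a_succ_gt0 nu M eps Hnu). intro k.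
  destruct (a_eq_succ k) as [Hpos Hfx].
  rewrite A_succ.
  apply (step_size_ln_bound nu M eps (dnorm N (D (y k))) (A k) (a (S k)) (f (y k) - f (x (S k))));
    auto using A_ge0, a_succ_gt0, dnorm_gt0.
  - rewrite <- Hfx. field. exact Hpos.
  - apply descent_step; auto.
Qed.

End Run.

Theorem mainTheorem9 (n : nat) (N : Vec n -> R) (f : Vec n -> R) (D : Vec n -> Vec n)
  (sharp : Vec n -> Vec n) (d : Vec n -> R) (Dd : Vec n -> Vec n) (eps : R)
  (x v y : nat -> Vec n) (beta h a A : nat -> R) (psi : nat -> Vec n -> R) :
  is_norm N ->
  is_sharp N sharp ->
  prox_fun N d Dd ->
  ((convex f /\ forall z, is_subgrad f z (D z)) \/ C1_grad N f D) ->
  0 < eps ->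
  UAGMsDR_run N f D sharp d Dd eps x v y beta h a A psi ->
  (forall k, D (y k) <> vzero) ->
  forall k : nat,
    (A k * f (x k) <= psi k (v k) + A k * eps / 2 /\
     (forall z, psi k (v k) <= psi k z)) /\
    (forall nu M, 0 <= nu <= 1 -> 0 < M -> holder N D nu M ->
       c_nu nu * hpow (INR k) ((1 + 3 * nu) / (1 + nu))
         * Rpower eps ((1 - nu) / (1 + nu))
         / (Rpower 2 ((1 + 3 * nu) / (1 + nu)) * Rpower M (2 / (1 + nu)))
       <= A k).
Proof.
  intros HN Hsharp Hprox Hf Heps Hrun Hnz k.
  split; [split|].
  - eapply estimate_sequence; eauto.
  - eapply psi_v_min; eauto.
  - intros nu M Hnu HM Hhol. eapply A_rate; eauto.
Qed.
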